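(* Consider a Markov decision process with continuous state space $\mathcal{S}$, continuous action space $\mathcal{A}$, transition density $p(\mathbf{s}'|\mathbf{s},\mathbf{a})$ and discount factor $\gamma\in(0,1)$, and let $r_1, r_2$ be bounded reward functions. Let $Q_1^*$ and $Q_2^*$ be the optimal soft Q-functions (temperature $1$) for the rewards $r_1$ and $r_2$, with optimal soft policies $\pi_i^*(\mathbf{a}|\mathbf{s}) \propto \exp(Q_i^*(\mathbf{s},\mathbf{a}))$, $i=1,2$. Define $Q_\Sigma \triangleq \frac{1}{2}(Q_1^*+Q_2^* )$ and $r_\mathcal{C}\triangleq \frac{1}{2}(r_1+r_2)$, and let $Q_\mathcal{C}^*$ be the optimal soft Q-function for the reward $r_\mathcal{C}$. Then for all $\mathbf{s}\in\mathcal{S}$ and all $\mathbf{a}\in\mathcal{A}$, $$Q_\Sigma(\mathbf{s},\mathbf{a}) \ge Q_\mathcal{C}^*(\mathbf{s},\mathbf{a}) \ge Q_\Sigma(\mathbf{s},\mathbf{a}) - C^*(\mathbf{s},\mathbf{a}),$$ where $C^*$ is the fixed point of the iteration $$C(\mathbf{s},\mathbf{a}) \leftarrow \gamma\, \mathbb{E}_{\mathbf{s}'\sim p(\mathbf{s}'|\mathbf{s},\mathbf{a})}\Big[ D_{1/2}\big(\pi_1^*(\cdot|\mathbf{s}')\,\|\,\pi_2^*(\cdot|\mathbf{s}')\big) + \max_{\mathbf{a}'\in\mathcal{A}} C(\mathbf{s}',\mathbf{a}')\Big],$$ and $D_{1/2}$ denotes the Rényi divergence of order $1/2$.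
   Context: Soft (maximum-entropy) reinforcement learning with temperature $1$: for a bounded reward $r$, the soft Bellman backup maps a bounded function $Q$ on $\mathcal{S}\times\mathcal{A}$ to $r(\mathbf{s},\mathbf{a}) + \gamma\,\mathbb{E}_{\mathbf{s}'\sim p(\mathbf{s}'|\mathbf{s},\mathbf{a})}[V(\mathbf{s}')]$, where $V(\mathbf{s}) = \log\int_{\mathcal{A}} \exp(Q(\mathbf{s},\mathbf{a}))\,d\mathbf{a}$. This backup is a contraction, and the optimal soft Q-function $Q^*$ for reward $r$ is its unique fixed point; the corresponding optimal soft policy is $\pi^*(\mathbf{a}|\mathbf{s}) = \exp(Q^*(\mathbf{s},\mathbf{a}) - V^*(\mathbf{s}))$. The Rényi divergence of order $1/2$ between densities $p,q$ is $D_{1/2}(p\|q) = -2\log\int \sqrt{p(\mathbf{a})q(\mathbf{a})}\,d\mathbf{a}$. *)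

From HB Require Import structures.
From mathcomp Require Import all_boot all_order all_algebra.
From mathcomp Require Import all_classical all_reals all_analysis.
Set Implicit Arguments.
Unset Strict Implicit.
Unset Printing Implicit Defensive.
Import Order.TTheory GRing.Theory Num.Theory.
Local Open Scope classical_set_scope.
Local Open Scope ring_scope.

Section SoftRL.
Context (R : realType) (dS dA : measure_display)
  (S : measurableType dS) (A : measurableType dA)
  (mu : {finite_measure set A -> \bar R})     (* base measure "da" on actions *)
  (P : S -> A -> probability S R)
  (gamma : R).

Definition bounded_SA (f : S -> A -> R) := exists M : R, forall s a, `|f s a| <= M.

Definition softV (Q : S -> A -> R) (s : S) : R :=
  ln (Rintegral mu setT (fun a => expR (Q s a))).

Definition expect (s : S) (a : A) (f : S -> R) : R := Rintegral (P s a) setT f.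

Definition soft_backup (r Q : S -> A -> R) (s : S) (a : A) : R :=
  r s a + gamma * expect s a (softV Q).

(* Q is the optimal soft Q-function for reward r: the (unique) bounded,
   measurable fixed point of the soft Bellman backup *)
Definition is_opt_softQ (r Q : S -> A -> R) :=
  [/\ bounded_SA Q,
      measurable_fun setT (fun x : S * A => Q x.1 x.2) &
      forall s a, Q s a = soft_backup r Q s a].

Definition soft_policy (Q : S -> A -> R) (s : S) (a : A) : R :=
  expR (Q s a - softV Q s).

Definition renyi_half (p q : A -> R) : R :=
  - 2 * ln (Rintegral mu setT (fun a => Num.sqrt (p a * q a))).

Definition C_integrand (Q1 Q2 C : S -> A -> R) (s' : S) : R :=
  renyi_half (soft_policy Q1 s') (soft_policy Q2 s') + sup (range (C s')).

Definition C_backup (Q1 Q2 C : S -> A -> R) (s : S) (a : A) : R :=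
  gamma * expect s a (C_integrand Q1 Q2 C).

Definition is_C_fixpoint (Q1 Q2 C : S -> A -> R) :=
  [/\ bounded_SA C,
      measurable_fun setT (C_integrand Q1 Q2 C) &
      forall s a, C s a = C_backup Q1 Q2 C s a].

End SoftRL.

(* The soft value V(s) = log \int exp Q(s, a) da is monotone in Q and
   shifts by c when Q does, and by Cauchy-Schwarz it is convex in Q:
   V_avg <= (V_1 + V_2) / 2, where V_avg is the soft value of Q_avg = (Q_1 + Q_2) / 2.
   Moreover the Renyi divergence of order 1/2 between the two optimal policies is
   exactly V_1 + V_2 - 2 V_avg.  Since Q_avg = r_C + gamma E[(V_1 + V_2) / 2], both
   gaps Q_C - Q_avg and Q_avg - C - Q_C are bounded by gamma times their own
   supremum, hence are nonpositive because gamma < 1. *)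

From HB Require Import structures.
From mathcomp Require Import all_boot all_order all_algebra.
From mathcomp Require Import all_classical all_reals all_analysis.
From mathcomp Require Import measurable_realfun lra.
Import Order.TTheory GRing.Theory Num.Theory.
Local Open Scope classical_set_scope.
Local Open Scope ring_scope.

Section bounded_measurable.
Context {R : realType} {d : measure_display} {T : measurableType d}.
Implicit Types (f g : T -> R) (c k : R).

Definition bounded_measurable f :=
  measurable_fun setT f /\ exists M : R, forall x, `|f x| <= M.

Lemma bounded_measurable_cst c : bounded_measurable (fun=> c).
Proof. by split; [exact: measurable_cst | exists `|c|]. Qed.

Lemma bounded_measurableD {f g} : bounded_measurable f -> bounded_measurable g ->
  bounded_measurable (fun x => f x + g x).
Proof.
move=> [mf [M fM]] [mg [N gN]]; split; first exact: measurable_funD.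
by exists (M + N) => x; rewrite (le_trans (ler_normD _ _)) ?lerD.
Qed.

Lemma bounded_measurableMl k {f} : bounded_measurable f ->
  bounded_measurable (fun x => k * f x).
Proof.
move=> [mf [M fM]]; split; first exact: measurable_funM.
by exists (`|k| * M) => x; rewrite normrM ler_wpM2l.
Qed.

Lemma bounded_measurableMr k {f} : bounded_measurable f ->
  bounded_measurable (fun x => f x * k).
Proof.
by move=> bf; under eq_fun do rewrite mulrC; exact: bounded_measurableMl.
Qed.

Lemma bounded_measurable_integrable (m : {finite_measure set T -> \bar R}) {f} :
  bounded_measurable f -> m.-integrable setT (EFin \o f).
Proof.
move=> [mf [M fM]]; apply: measurable_bounded_integrable => //.
  exact: fin_num_fun_lty (fin_num_measure m).
exists M; split; first exact: num_real.
by move=> N MN x _; exact: le_trans (fM x) (ltW MN).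
Qed.

End bounded_measurable.

Section expectation.
Context {R : realType} {d : measure_display} {T : measurableType d}.
Context (Pr : probability T R).
Implicit Types (f g : T -> R) (c : R).

Lemma Rintegral_prob_cst c : \int[Pr]_(x in setT) c = c.
Proof. by rewrite Rintegral_cst // (congr1 fine (probability_setT Pr)) mulr1. Qed.

Lemma le_Rintegral_prob_shift {f g c} :
  bounded_measurable f -> bounded_measurable g -> (forall x, f x <= g x + c) ->
  \int[Pr]_(x in setT) f x <= \int[Pr]_(x in setT) g x + c.
Proof.
move=> bf bg fgc; have int := bounded_measurable_integrable Pr.
have bc : bounded_measurable (fun _ : T => c) := bounded_measurable_cst c.
have bgc := bounded_measurableD bg bc.
rewrite -[c in X in _ <= X]Rintegral_prob_cst -RintegralD //; try exact: int.
by apply: le_Rintegral => //; try exact: int.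
Qed.

End expectation.

Lemma le0_of_le_contraction_sup {R : realType} {T : Type} {h : T -> R} {g : R} :
  g < 1 -> has_ubound (range h) ->
  (forall x, h x <= g * sup (range h)) -> forall x, h x <= 0.
Proof.
move=> g_lt1 h_ub h_le x; set e := sup _ in h_le.
have e_le : e <= g * e by apply: ge_sup; [exists (h x), x | move=> _ [y _ <-]].
have e_le0 : e <= 0 by nra.
by rewrite (le_trans _ e_le0) //; apply: ub_le_sup => //; exists x.
Qed.

Section bounded_SA.
Context {R : realType} {dS dA : measure_display}.
Context {S : measurableType dS} {A : measurableType dA}.
Implicit Types f g : S -> A -> R.

Lemma bounded_SAD {f g} : bounded_SA f -> bounded_SA g ->
  bounded_SA (fun s a => f s a + g s a).
Proof.
move=> [M fM] [N gN]; exists (M + N) => s a.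
by rewrite (le_trans (ler_normD _ _)) ?lerD.
Qed.

Lemma bounded_SAN {f} : bounded_SA f -> bounded_SA (fun s a => - f s a).
Proof. by move=> [M fM]; exists M => s a; rewrite normrN. Qed.

Lemma bounded_SAMr k {f} : bounded_SA f -> bounded_SA (fun s a => f s a * k).
Proof.
by move=> [M fM]; exists (M * `|k|) => s a; rewrite normrM ler_wpM2r.
Qed.

Lemma bounded_SA_has_ubound {f} : bounded_SA f ->
  has_ubound (range (fun x : S * A => f x.1 x.2)).
Proof.
move=> [M fM]; exists M => _ [[s a] _ <-].
exact: le_trans (ler_norm _) (fM s a).
Qed.

Lemma bounded_SA_le_sup_section {f} s a : bounded_SA f -> f s a <= sup (range (f s)).
Proof.
move=> [M fM]; apply: ub_le_sup; last by exists a.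
by exists M => _ [a' _ <-]; exact: le_trans (ler_norm _) (fM s a').
Qed.

Lemma bounded_SA_sup_section {f} : bounded_SA f ->
  bounded_SA (fun s (_ : A) => sup (range (f s))).
Proof.
move=> bf; have [M fM] := bf; exists M => s _; rewrite ler_norml.
have /andP[fs_lb _] : - M <= f s point <= M by rewrite -ler_norml.
rewrite (le_trans fs_lb (bounded_SA_le_sup_section _ _ bf)) /=.
apply: ge_sup; first by exists (f s point), point.
by move=> _ [a _ <-]; exact: le_trans (ler_norm _) (fM s a).
Qed.

Definition bounded_measurable_SA (Q : S -> A -> R) :=
  bounded_SA Q /\ measurable_fun setT (fun x : S * A => Q x.1 x.2).

Lemma bounded_measurable_SA_cst (c : R) : bounded_measurable_SA (fun _ _ => c).
Proof. by split; [exists `|c| | exact: measurable_cst]. Qed.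

Lemma bounded_measurable_SA_avg {Q1 Q2} :
  bounded_measurable_SA Q1 -> bounded_measurable_SA Q2 ->
  bounded_measurable_SA (fun s a => (Q1 s a + Q2 s a) / 2).
Proof.
move=> [bQ1 mQ1] [bQ2 mQ2]; split; first exact: bounded_SAMr (bounded_SAD bQ1 bQ2).
by apply: measurable_funM => //; exact: measurable_funD.
Qed.

End bounded_SA.

Lemma expR_midpoint_le {R : realType} (x y t : R) : 0 < t ->
  2 * expR ((x + y) / 2) <= t * expR x + t^-1 * expR y.
Proof.
move=> t_gt0; set a := t * expR x; set b := t^-1 * expR y.
have ab : expR ((x + y) / 2) ^+ 2 = a * b.
  rewrite -expRM_natr divfK ?pnatr_eq0 // expRD.
  by rewrite /a /b mulrACA mulfV ?gt_eqF // mul1r.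
have a_ge0 : 0 <= a by rewrite mulr_ge0 ?ltW ?expR_gt0.
have b_ge0 : 0 <= b by rewrite mulr_ge0 ?ltW ?invr_gt0 ?expR_gt0.
have p_ge0 : 0 <= 2 * expR ((x + y) / 2) by rewrite mulr_ge0 // ltW ?expR_gt0.
rewrite -ler_sqr ?nnegrE ?addr_ge0 //.
by rewrite exprMn ab -natrX mulr_natl; exact: (leif_AGM2_scaled a b).1.
Qed.

Lemma sqrt_expR {R : realType} (x : R) : Num.sqrt (expR x) = expR (x / 2).
Proof.
have two_neq0 : (2 : R) != 0 by rewrite pnatr_eq0.
rewrite -[in LHS](divfK two_neq0 x) expRM_natr sqrtr_sqr.
by rewrite gtr0_norm ?expR_gt0.
Qed.

Section soft_value.
Context {R : realType} {dS dA : measure_display}.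
Context {S : measurableType dS} {A : measurableType dA}.
Context (mu : {finite_measure set A -> \bar R}).
Hypothesis mu_gt0 : (0 < mu setT)%E.
Implicit Types (Q : S -> A -> R) (s : S) (c : R).

Lemma bounded_measurable_expR_section {Q} s : bounded_measurable_SA Q ->
  bounded_measurable (fun a => expR (Q s a)).
Proof.
move=> [[M QM] mQ]; split.
  apply: measurableT_comp; first exact: measurable_expR.
  exact: measurable_fun_pair2 s mQ.
exists (expR M) => a; rewrite gtr0_norm ?expR_gt0 // ler_expR.
exact: le_trans (ler_norm _) (QM s a).
Qed.

Let fine_mu_gt0 : 0 < fine (mu setT).
Proof. by rewrite fine_gt0 // mu_gt0 /= (fin_num_fun_lty (fin_num_measure mu)). Qed.

Lemma Rintegral_expR_gt0 {Q} s : bounded_measurable_SA Q ->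
  0 < \int[mu]_(a in setT) expR (Q s a).
Proof.
move=> bQ; have [[M QM] _] := bQ.
apply: (@lt_le_trans _ _ (\int[mu]_(a in setT) expR (- M))).
  by rewrite Rintegral_cst // mulr_gt0 ?expR_gt0.
apply: le_Rintegral => //; try apply: bounded_measurable_integrable.
- exact: bounded_measurable_cst.
- exact: bounded_measurable_expR_section.
by move=> a _; rewrite ler_expR lerNl (le_trans (ler_norm _)) // normrN.
Qed.

Lemma softV_cst c s : softV mu (fun _ _ => c) s = c + ln (fine (mu setT)).
Proof. by rewrite /softV Rintegral_cst // lnM ?posrE ?expR_gt0 // expRK. Qed.

Lemma softV_le_shift {Q Q'} c s :
  bounded_measurable_SA Q -> bounded_measurable_SA Q' ->
  (forall a, Q s a <= Q' s a + c) -> softV mu Q s <= softV mu Q' s + c.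
Proof.
move=> bQ bQ' QQ'c; have int := bounded_measurable_integrable mu.
have bexpQ := bounded_measurable_expR_section s bQ.
have bexpQ' := bounded_measurable_expR_section s bQ'.
have bexpQ'c := bounded_measurableMl (expR c) bexpQ'.
have I_le : \int[mu]_(a in setT) expR (Q s a) <=
           expR c * \int[mu]_(a in setT) expR (Q' s a).
  rewrite -RintegralZl //; last exact: int.
  apply: le_Rintegral => //; try exact: int.
  by move=> a _; rewrite -expRD ler_expR addrC.
have I_gt0 := Rintegral_expR_gt0 s bQ; have I'_gt0 := Rintegral_expR_gt0 s bQ'.
rewrite /softV -(expRK c) addrC -lnM ?posrE ?expR_gt0 //.
by rewrite ler_ln ?posrE ?mulr_gt0 ?expR_gt0.
Qed.

Lemma measurable_softV {Q} : measurable_fun setT (fun x : S * A => Q x.1 x.2) ->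
  measurable_fun setT (softV mu Q).
Proof.
move=> mQ; have mexpQ : measurable_fun setT (fun x : S * A => (expR (Q x.1 x.2))%:E).
  apply/measurable_EFinP.
  exact: (measurableT_comp (f := expR) (g := fun x : S * A => Q x.1 x.2)).
have expQ_ge0 (x : S * A) : (0 <= (expR (Q x.1 x.2))%:E)%E.
  by rewrite lee_fin ltW ?expR_gt0.
have mF := measurable_fun_fubini_tonelli_F (m2 := mu) _ mexpQ expQ_ge0.
apply: measurableT_comp; first exact: measurable_ln.
by apply: measurableT_comp mF; exact: fine_measurable.
Qed.

Lemma softV_bounded_measurable {Q} : bounded_measurable_SA Q ->
  bounded_measurable (softV mu Q).
Proof.
move=> bQ; split; first exact: measurable_softV bQ.2.
have [M QM] := bQ.1.
set L := ln (fine (mu setT)); exists (M + `|L|) => s.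
have Q_bounds a : - M <= Q s a <= M by rewrite -ler_norml.
have upper : softV mu Q s <= L + M.
  rewrite -[L]add0r -(softV_cst 0 s); apply: softV_le_shift => // [|a].
    exact: bounded_measurable_SA_cst.
  by rewrite add0r; case/andP: (Q_bounds a).
have lower : L <= softV mu Q s + M.
  rewrite -[L]add0r -(softV_cst 0 s); apply: softV_le_shift => // [|a].
    exact: bounded_measurable_SA_cst.
  by rewrite -lerBlDr sub0r; case/andP: (Q_bounds a).
have := ler_norm L; have := ler_norm (- L); rewrite normrN => ? ?.
by rewrite ler_norml; apply/andP; split; lra.
Qed.

Lemma Rintegral_expR_avg_sqr_le {Q1 Q2} s :
  bounded_measurable_SA Q1 -> bounded_measurable_SA Q2 ->
  (\int[mu]_(a in setT) expR ((Q1 s a + Q2 s a) / 2)) ^+ 2 <=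
  \int[mu]_(a in setT) expR (Q1 s a) * \int[mu]_(a in setT) expR (Q2 s a).
Proof.
move=> bQ1 bQ2; have bQ := bounded_measurable_SA_avg bQ1 bQ2.
have int := bounded_measurable_integrable mu.
have be1 := bounded_measurable_expR_section s bQ1.
have be2 := bounded_measurable_expR_section s bQ2.
have be := bounded_measurable_expR_section s bQ.
have J_gt0 := Rintegral_expR_gt0 s bQ.
have I1_gt0 := Rintegral_expR_gt0 s bQ1.
set J := \int[mu]_(a in setT) _ in J_gt0 *.
set I1 := \int[mu]_(a in setT) _ in I1_gt0 *.
set I2 := \int[mu]_(a in setT) _.
(* AM-GM with the weight t := J / I1 turns the integrated bound into
   2 J <= J + I1 I2 / J. *)
set t := J / I1; have t_gt0 : 0 < t by rewrite divr_gt0.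
have AMGM : 2 * J <= t * I1 + t^-1 * I2.
  have bt1 := bounded_measurableMl t be1.
  have bt2 := bounded_measurableMl t^-1 be2.
  rewrite /J /I1 /I2 -!RintegralZl ?int // -RintegralD ?int //.
  apply: le_Rintegral => //; try apply: int.
  - exact: bounded_measurableMl.
  - exact: bounded_measurableD.
  by move=> a _; exact: expR_midpoint_le.
move: AMGM; rewrite /t divfK ?gt_eqF // invf_div => AMGM.
have : J <= I1 / J * I2 by rewrite -(lerD2l J) -mulr2n -mulr_natl.
by rewrite -(ler_pM2r J_gt0) mulrAC divfK ?gt_eqF // expr2.
Qed.

Lemma softV_avg_le {Q1 Q2} s :
  bounded_measurable_SA Q1 -> bounded_measurable_SA Q2 ->
  softV mu (fun s a => (Q1 s a + Q2 s a) / 2) s <= (softV mu Q1 s + softV mu Q2 s) / 2.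
Proof.
move=> bQ1 bQ2; have bQ := bounded_measurable_SA_avg bQ1 bQ2.
have J_gt0 := Rintegral_expR_gt0 s bQ.
have I1_gt0 := Rintegral_expR_gt0 s bQ1.
have I2_gt0 := Rintegral_expR_gt0 s bQ2.
rewrite /softV ler_pdivlMr // mulr_natr -lnXn // -lnM ?posrE //.
by rewrite ler_ln ?posrE ?exprn_gt0 ?mulr_gt0 //; exact: Rintegral_expR_avg_sqr_le.
Qed.

Lemma renyi_half_soft_policy {Q1 Q2} s :
  bounded_measurable_SA Q1 -> bounded_measurable_SA Q2 ->
  renyi_half mu (soft_policy mu Q1 s) (soft_policy mu Q2 s) =
  softV mu Q1 s + softV mu Q2 s - 2 * softV mu (fun s a => (Q1 s a + Q2 s a) / 2) s.
Proof.
move=> bQ1 bQ2; have bQ := bounded_measurable_SA_avg bQ1 bQ2.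
set V1 := softV mu Q1 s; set V2 := softV mu Q2 s; set V := softV mu _ s.
have J_eq : \int[mu]_(a in setT) expR ((Q1 s a + Q2 s a) / 2) = expR V.
  by rewrite /V /softV lnK // posrE; exact: Rintegral_expR_gt0 s bQ.
have sqrt_policy a : Num.sqrt (soft_policy mu Q1 s a * soft_policy mu Q2 s a) =
    expR (- ((V1 + V2) / 2)) * expR ((Q1 s a + Q2 s a) / 2).
  rewrite /soft_policy -/V1 -/V2 -!expRD sqrt_expR; congr expR; lra.
rewrite /renyi_half (eq_Rintegral _ (fun a _ => sqrt_policy a)) RintegralZl //.
  rewrite J_eq -expRD expRK; lra.
exact: bounded_measurable_integrable (bounded_measurable_expR_section s bQ).
Qed.

End soft_value.

Section soft_Q_composition.
Context {R : realType} {dS dA : measure_display}.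
Context {S : measurableType dS} {A : measurableType dA}.
Context {mu : {finite_measure set A -> \bar R}} {P : S -> A -> probability S R}.
Context {gamma : R}.
Hypotheses (mu_gt0 : (0 < mu setT)%E) (gamma_ge0 : 0 <= gamma) (gamma_lt1 : gamma < 1).
Context {r1 r2 Q1 Q2 QC : S -> A -> R}.
Hypothesis Q1_opt : is_opt_softQ mu P gamma r1 Q1.
Hypothesis Q2_opt : is_opt_softQ mu P gamma r2 Q2.
Hypothesis QC_opt : is_opt_softQ mu P gamma (fun s a => (r1 s a + r2 s a) / 2) QC.

Let bQ1 : bounded_measurable_SA Q1. Proof. by case: Q1_opt. Qed.
Let bQ2 : bounded_measurable_SA Q2. Proof. by case: Q2_opt. Qed.
Let bQC : bounded_measurable_SA QC. Proof. by case: QC_opt. Qed.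
Let bQavg := bounded_measurable_SA_avg bQ1 bQ2.
Let bV1 := softV_bounded_measurable mu mu_gt0 bQ1.
Let bV2 := softV_bounded_measurable mu mu_gt0 bQ2.
Let bVC := softV_bounded_measurable mu mu_gt0 bQC.
Let bVavg := softV_bounded_measurable mu mu_gt0 bQavg.
Let bW : bounded_measurable (fun s => (softV mu Q1 s + softV mu Q2 s) / 2).
Proof. by apply: bounded_measurableMr; exact: bounded_measurableD. Qed.

Lemma soft_backup_avg s a : (Q1 s a + Q2 s a) / 2 =
  (r1 s a + r2 s a) / 2 +
  gamma * expect P s a (fun s' => (softV mu Q1 s' + softV mu Q2 s') / 2).
Proof.
have [_ _ ->] := Q1_opt; have [_ _ ->] := Q2_opt.
have int := bounded_measurable_integrable (P s a).
rewrite /soft_backup /expect RintegralZr ?RintegralD ?int //.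
  by rewrite addrACA -mulrDr mulrDl mulrA.
exact: bounded_measurableD.
Qed.

Lemma opt_softQ_le_avg s a : QC s a <= (Q1 s a + Q2 s a) / 2.
Proof.
have bdelta : bounded_SA (fun s a => QC s a - (Q1 s a + Q2 s a) / 2).
  exact: bounded_SAD bQC.1 (bounded_SAN (bounded_SAMr _ (bounded_SAD bQ1.1 bQ2.1))).
have delta_ub := bounded_SA_has_ubound bdelta.
rewrite -subr_le0; apply: (le0_of_le_contraction_sup gamma_lt1 delta_ub _ (s, a)).
move=> {s a} [s a]; set e := sup _.
have QC_le s' a' : QC s' a' <= (Q1 s' a' + Q2 s' a') / 2 + e.
  by rewrite -lerBlDl; apply: (ub_le_sup delta_ub); exists (s', a').
have VC_le s' : softV mu QC s' <= (softV mu Q1 s' + softV mu Q2 s') / 2 + e.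
  rewrite (le_trans (softV_le_shift mu mu_gt0 e s' bQC bQavg (QC_le s'))) //.
  by rewrite lerD2r (softV_avg_le mu mu_gt0).
have := ler_wpM2l gamma_ge0 (le_Rintegral_prob_shift (P s a) bVC bW VC_le).
rewrite /= soft_backup_avg; have [_ _ ->] := QC_opt; rewrite /soft_backup /expect /=.
by rewrite mulrDr; lra.
Qed.

Context {C : S -> A -> R}.
Hypothesis C_fix : is_C_fixpoint mu P gamma Q1 Q2 C.

Lemma C_integrandE s : C_integrand mu Q1 Q2 C s =
  softV mu Q1 s + softV mu Q2 s - 2 * softV mu (fun s a => (Q1 s a + Q2 s a) / 2) s
  + sup (range (C s)).
Proof. by rewrite /C_integrand (renyi_half_soft_policy mu mu_gt0 s bQ1 bQ2). Qed.

Let bI : bounded_measurable (C_integrand mu Q1 Q2 C).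
Proof.
have [bC mI _] := C_fix; split => //.
have [M supCM] := bounded_SA_sup_section bC.
have [_ [N FN]] := bounded_measurableD (bounded_measurableD bV1 bV2)
  (bounded_measurableMl (- 2) bVavg).
exists (N + M) => s; rewrite C_integrandE (le_trans (ler_normD _ _)) // lerD //.
  by have := FN s; rewrite mulNr.
exact: supCM s point.
Qed.

Lemma avg_subC_le_opt_softQ s a : (Q1 s a + Q2 s a) / 2 - C s a <= QC s a.
Proof.
have [bC _ C_eq] := C_fix.
have bdelta : bounded_SA (fun s a => (Q1 s a + Q2 s a) / 2 - C s a - QC s a).
  apply: bounded_SAD (bounded_SAN bQC.1).
  exact: bounded_SAD (bounded_SAMr _ (bounded_SAD bQ1.1 bQ2.1)) (bounded_SAN bC).
have delta_ub := bounded_SA_has_ubound bdelta.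
rewrite -subr_le0; apply: (le0_of_le_contraction_sup gamma_lt1 delta_ub _ (s, a)).
move=> {s a} [s a]; set e := sup _.
have Qavg_le s' a' :
    (Q1 s' a' + Q2 s' a') / 2 <= QC s' a' + (sup (range (C s')) + e).
  have : (Q1 s' a' + Q2 s' a') / 2 - C s' a' - QC s' a' <= e.
    by apply: (ub_le_sup delta_ub); exists (s', a').
  by have := bounded_SA_le_sup_section s' a' bC; lra.
have W_le s' : (softV mu Q1 s' + softV mu Q2 s') / 2 <=
    C_integrand mu Q1 Q2 C s' + softV mu QC s' + e.
  (* By the Renyi identity and V_avg <= (V1 + V2) / 2 this reduces to
     V_avg <= V_C + sup C(s') + e, the soft-value image of Qavg_le. *)
  have := softV_le_shift mu mu_gt0 _ s' bQavg bQC (Qavg_le s').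
  have := softV_avg_le mu mu_gt0 s' bQ1 bQ2.
  rewrite C_integrandE.
  move: (softV mu Q1 s') (softV mu Q2 s') (softV mu QC s') (sup (range (C s'))).
  by move=> V1 V2 VC supC; lra.
have := ler_wpM2l gamma_ge0
  (le_Rintegral_prob_shift (P s a) bW (bounded_measurableD bI bVC) W_le).
rewrite RintegralD //; try exact: bounded_measurable_integrable.
rewrite /= soft_backup_avg (C_eq s a); have [_ _ ->] := QC_opt.
by rewrite /soft_backup /C_backup /expect /= !mulrDr; lra.
Qed.

End soft_Q_composition.

Theorem lemma1 (R : realType) (dS dA : measure_display)
  (S : measurableType dS) (A : measurableType dA)
  (mu : {finite_measure set A -> \bar R})
  (P : S -> A -> probability S R) (gamma : R)
  (r1 r2 Q1 Q2 QC C : S -> A -> R) :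
  (0 < mu setT)%E ->
  0 < gamma < 1 ->
  bounded_SA r1 -> bounded_SA r2 ->
  is_opt_softQ mu P gamma r1 Q1 ->
  is_opt_softQ mu P gamma r2 Q2 ->
  is_opt_softQ mu P gamma (fun s a => (r1 s a + r2 s a) / 2) QC ->
  is_C_fixpoint mu P gamma Q1 Q2 C ->
  forall (s : S) (a : A),
    QC s a <= (Q1 s a + Q2 s a) / 2 /\
    (Q1 s a + Q2 s a) / 2 - C s a <= QC s a.
Proof.
move=> mu_gt0 /andP[/ltW gamma_ge0 gamma_lt1] _ _ Q1_opt Q2_opt QC_opt C_fix s a.
split.
- exact: (opt_softQ_le_avg mu_gt0 gamma_ge0 gamma_lt1 Q1_opt Q2_opt QC_opt).
- exact: (avg_subC_le_opt_softQ mu_gt0 gamma_ge0 gamma_lt1 Q1_opt Q2_opt QC_opt C_fix).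
Qed.
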